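(* Let $k$ be a commutative ring and $A$ a commutative $k$-algebra such that $\operatorname{Ider}_k(A)=\operatorname{Der}_k(A)$ and $\operatorname{Der}_k(A)$ is a free $A$-module of finite rank with basis $D^1_1,\dots,D^n_1$, where $D^1,\dots,D^n\in\operatorname{HS}_k(A)$. Then every $k$-linear differential operator $P:A\to A$ of order $\le d$ can be written uniquely as $$P=\sum_{\alpha\in\mathbb N^n,\ |\alpha|\le d}a_\alpha\,\mathbf D_\alpha,\qquad a_\alpha\in A,$$ where $\mathbf D_\alpha=D^1_{\alpha_1}\circ\cdots\circ D^n_{\alpha_n}$.
   Context: $\operatorname{HS}_k(A)$: infinite sequences $D=(D_0,D_1,\dots)$ of $k$-linear maps $A\to A$ with $D_0=\mathrm{Id}$ and $D_i(xy)=\sum_{r+s=i}D_r(x)D_s(y)$. $\operatorname{Ider}_k(A)=\{D_1:D\in\operatorname{HS}_k(A)\}$. $k$-linear differential operators of order $\le d$ are defined inductively: order $0$ = multiplications by elements of $A$; $\varphi\in\operatorname{End}_k(A)$ has order $\le i+1$ iff $\varphi\circ a-a\circ\varphi$ has order $\le i$ for all $a\in A$. *)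

From HB Require Import structures.
From mathcomp Require Import all_boot all_order all_algebra.
Set Implicit Arguments. Unset Strict Implicit. Unset Printing Implicit Defensive.
Import GRing.Theory.
Local Open Scope ring_scope.

Section HSDefs.
Variables (k : comPzRingType) (A : comAlgType k).

Definition klinear (f : A -> A) : Prop :=
  forall (c : k) (x y : A), f (c *: x + y) = c *: f x + f y.

Definition is_der (f : A -> A) : Prop :=
  klinear f /\ forall x y : A, f (x * y) = f x * y + x * f y.

Definition is_HS (D : nat -> A -> A) : Prop :=
  (forall x, D 0%N x = x) /\ (forall i, klinear (D i)) /\
  (forall (i : nat) (x y : A),
      D i (x * y) = \sum_(r < i.+1) D r x * D (i - r)%N y).

Definition is_ider (f : A -> A) : Prop :=
  exists D, is_HS D /\ D 1%N = f.

Fixpoint diffop_le (d : nat) (P : A -> A) : Prop :=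
  match d with
  | 0%N => exists a : A, forall x, P x = a * x
  | d'.+1 => klinear P /\ forall a : A, diffop_le d' (fun x => P (a * x) - a * P x)
  end.

Definition Dmulti (n : nat) (D : 'I_n -> nat -> A -> A) (alpha : 'I_n -> nat)
  : A -> A :=
  foldr (fun i f => D i (alpha i) \o f) id (enum 'I_n).

End HSDefs.

(* For a multi-index alpha put
   D_alpha = D^1_{alpha_1} o ... o D^n_{alpha_n}, and for coefficients c let
   Dsum m c = sum_{|alpha| <= m} c_alpha D_alpha.

   1. Leibniz rule: D_alpha (y x) = sum_{beta <= alpha} D_{alpha - beta} y * D_beta x,
      obtained factor by factor from the Hasse-Schmidt rule.  Hence the
      commutator [Dsum m c, y] is again of the form Dsum (m - 1) c', so every
      Dsum m c is a differential operator of order <= m.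
   2. Uniqueness: Dsum m c = 0 forces c = 0.  By induction the coefficients of
      [Dsum m c, y] vanish; at |beta| = m - 1 they are
      sum_j c_{beta + e_j} D^j_1 y, and freeness of the D^j_1 kills the top
      coefficients of c.
   3. Existence, by induction on the order m + 1 of P: write
      [P, y] = Dsum m (c y).  By uniqueness, y |-> c_y(beta) is a derivation
      for |beta| = m, so c_y(beta) = sum_j h_beta(j) D^j_1 y.  Comparing
      [[P, y], z] with [[P, z], y] gives h_{g + e_i}(j) = h_{g + e_j}(i), so
      g_{beta + e_j} := h_beta(j) is well defined on |alpha| = m + 1, and
      P - sum_{|alpha| = m + 1} g_alpha D_alpha has order <= m.

   Multi-indices are finite functions 'I_n -> 'I_N.+1; the results hold for
   orders m <= N, and the theorem takes N = d. *)

From HB Require Import structures.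
From mathcomp Require Import all_boot all_order all_algebra.
From mathcomp Require Import ring.
From Stdlib Require Import ClassicalEpsilon FunctionalExtensionality.
Set Implicit Arguments. Unset Strict Implicit. Unset Printing Implicit Defensive.
Import GRing.Theory.
Local Open Scope ring_scope.

Section KLinear.
Variables (k : comPzRingType) (A : comAlgType k).

Lemma klinearD (f : A -> A) : klinear f -> {morph f : x y / x + y}.
Proof. by move=> hf x y; have := hf 1 x y; rewrite !scale1r. Qed.

Lemma klinear0 (f : A -> A) : klinear f -> f 0 = 0.
Proof. by move=> hf; apply: (addrI (f 0)); rewrite -klinearD // !addr0. Qed.

Lemma klinear_sum (f : A -> A) (I : Type) (r : seq I) (P : pred I) (F : I -> A) :
  klinear f -> f (\sum_(i <- r | P i) F i) = \sum_(i <- r | P i) f (F i).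
Proof.
move=> hf; elim/big_rec2: _ => [|i y1 y2 _ <-]; first exact: klinear0.
exact: klinearD.
Qed.

Lemma klinear_comp (f g : A -> A) : klinear f -> klinear g -> klinear (f \o g).
Proof. by move=> hf hg c x y /=; rewrite hg hf. Qed.

End KLinear.

Notation mindex n N := {ffun 'I_n -> 'I_N.+1}.

Section MultiIndex.
Variables n N : nat.
Local Notation M := (mindex n N).

Definition mval (a : M) : 'I_n -> nat := fun i => a i.
Definition deg (a : M) : nat := \sum_(i < n) (a i : nat).
Definition mle (b a : M) : bool := [forall i, (b i <= a i)%N].
Definition mlt (b a : M) : bool := mle b a && (b != a).
Definition mzero : M := [ffun => ord0].
(* Truncated operations: they are exact as long as the degrees stay <= N. *)
Definition msub (a b : M) : M := [ffun i => inord (a i - b i)].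
Definition madd1 (b : M) (j : 'I_n) : M := [ffun i => inord (b i + (i == j))].
Definition msub1 (a : M) (j : 'I_n) : M := [ffun i => inord (a i - (i == j))].
Definition upd (b : M) (i : 'I_n) (t : 'I_N.+1) : M :=
  [ffun j => if j == i then t else b j].

Lemma inordE_le (m : nat) : (m <= N)%N -> ((inord m : 'I_N.+1) : nat) = m.
Proof. by move=> h; rewrite inordK. Qed.

Lemma mzeroE i : (mzero i : nat) = 0%N.
Proof. by rewrite ffunE. Qed.

Lemma msubE a b i : (msub a b i : nat) = (a i - b i)%N.
Proof.
rewrite ffunE inordE_le //; apply: leq_trans (leq_subr _ _) _.
by rewrite -ltnS.
Qed.

Lemma msub1E a j i : (msub1 a j i : nat) = (a i - (i == j))%N.
Proof.
rewrite ffunE inordE_le //; apply: leq_trans (leq_subr _ _) _.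
by rewrite -ltnS.
Qed.

Lemma comp_le_deg (a : M) i : (a i <= deg a)%N.
Proof. by rewrite /deg (bigD1 i) //= leq_addr. Qed.

Lemma madd1E b j i : (deg b < N)%N -> (madd1 b j i : nat) = (b i + (i == j))%N.
Proof.
move=> h; rewrite ffunE inordE_le //.
by apply: leq_trans (leq_add (comp_le_deg b i) (leq_b1 _)) _; rewrite addn1.
Qed.

Lemma deg_eq0 a : (deg a == 0%N) = (a == mzero).
Proof.
rewrite /deg sum_nat_eq0; apply/forallP/eqP => [H|->].
  by apply/ffunP => i; apply/val_inj; rewrite /= mzeroE; apply/eqP/H.
by move=> i; rewrite mzeroE.
Qed.

Lemma deg_mzero : deg mzero = 0%N.
Proof. by apply/eqP; rewrite deg_eq0. Qed.

Lemma mle_refl a : mle a a.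
Proof. by apply/forallP. Qed.

Lemma msubaa a : msub a a = mzero.
Proof. by apply/ffunP => i; apply/val_inj; rewrite /= msubE mzeroE subnn. Qed.

Lemma mltP b a : mlt b a -> mle b a /\ exists j, (b j < a j)%N.
Proof.
case/andP=> hle ne; split=> //; apply/existsP; apply: contraR ne => /existsPn H.
apply/eqP/ffunP => i; apply/val_inj/eqP.
by rewrite eqn_leq (forallP hle i) leqNgt H.
Qed.

Lemma mlt_deg b a : mlt b a -> (deg b < deg a)%N.
Proof.
case/mltP=> /forallP H [i lti].
rewrite /deg (bigD1 i) //= [X in (_ < X)%N](bigD1 i) //=.
by rewrite -addSn leq_add // leq_sum // => j _; apply: H.
Qed.

Lemma deg_msub b a : mle b a -> deg a = (deg b + deg (msub a b))%N.
Proof.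
move/forallP=> H; rewrite /deg -big_split; apply: eq_bigr => i _ /=.
by rewrite msubE subnKC // H.
Qed.

Lemma deg_madd1 b j : (deg b < N)%N -> deg (madd1 b j) = (deg b).+1.
Proof.
move=> h; rewrite /deg (bigD1 j) //= [X in _ = X.+1](bigD1 j) //= madd1E // eqxx.
rewrite addn1 addSn; congr (_ + _)%N.+1; apply: eq_bigr => i ni.
by rewrite madd1E // (negbTE ni) addn0.
Qed.

Lemma deg_msub1 (a : M) j : (0 < a j)%N -> (deg (msub1 a j)).+1 = deg a.
Proof.
move=> h; rewrite /deg (bigD1 j) //= [X in _ = X](bigD1 j) //= msub1E eqxx.
rewrite -addSn subn1 prednK //; congr (_ + _)%N; apply: eq_bigr => i nij.
by rewrite msub1E (negbTE nij) subn0.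
Qed.

Lemma madd1_msub1 (a : M) j : (0 < a j)%N -> madd1 (msub1 a j) j = a.
Proof.
move=> h; apply/ffunP => i; apply/val_inj; rewrite /= ffunE msub1E.
case: (eqVneq i j) => [->|nij] /=; last by rewrite subn0 addn0 inord_val.
by rewrite subnK // inord_val.
Qed.

Lemma msub1_madd1 (b : M) j : (deg b < N)%N -> msub1 (madd1 b j) j = b.
Proof.
move=> h; apply/ffunP => i; apply/val_inj; rewrite /= ffunE madd1E //.
by rewrite addnK inord_val.
Qed.

Lemma msub1_madd1C (b : M) j j0 : (deg b < N)%N -> j != j0 -> (0 < b j0)%N ->
  msub1 (madd1 b j) j0 = madd1 (msub1 b j0) j.
Proof.
move=> h nj hb; apply/ffunP => i; rewrite [LHS]ffunE [RHS]ffunE madd1E // msub1E.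
congr inord.
case: (eqVneq i j) => [->|nij]; first by rewrite (negbTE nj) /= !subn0.
by case: (eqVneq i j0) => [->|nij0] /=; rewrite !addn0 ?subn0.
Qed.

Lemma madd1_onto (a : M) m : deg a = m.+1 ->
  exists b j, deg b = m /\ madd1 b j = a.
Proof.
move=> ha; have [j hj] : exists j, (0 < a j)%N.
  case: (pickP (fun j => (0 < a j)%N)) => [j hj|H0]; first by exists j.
  have /eqP : deg a == 0%N.
    by rewrite /deg sum_nat_eq0; apply/forallP => i; rewrite -leqn0 leqNgt H0.
  by rewrite ha.
exists (msub1 a j), j; rewrite madd1_msub1 //; split=> //.
by apply: succn_inj; rewrite deg_msub1.
Qed.

Lemma sum_madd1 (V : nmodType) m (b : M) (F : M -> V) : deg b = m -> (m < N)%N ->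
  \sum_(a | (deg a <= m.+1)%N && mlt b a) F a = \sum_(j < n) F (madd1 b j).
Proof.
move=> hb hm; have hbN : (deg b < N)%N by rewrite hb.
transitivity (\sum_(a in [set madd1 b j | j in [set: 'I_n]]) F a); last first.
  rewrite big_imset /=; first by apply: eq_bigl => j; rewrite in_setT.
  move=> j1 j2 _ _ E; have := congr1 (fun f : M => (f j1 : nat)) E.
  rewrite /= !madd1E // eqxx => /eqP; rewrite eqn_add2l.
  by case: (eqVneq j1 j2).
apply: eq_bigl => a; apply/idP/imsetP.
- case/andP => ha /mltP [hle [j ltj]].
  have hdeg : (deg (msub a b) <= 1)%N.
    by rewrite -(leq_add2l (deg b)) -deg_msub // addn1 hb.
  move: hdeg; rewrite /deg (bigD1 j) //= msubE => hdeg.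
  have ej : (a j - b j = 1)%N.
    apply/eqP; rewrite eqn_leq subn_gt0 ltj andbT.
    by apply: leq_trans hdeg; exact: leq_addr.
  move: hdeg; rewrite ej -[X in (_ <= X)%N](addn0 1) leq_add2l leqn0.
  rewrite sum_nat_eq0 => /forallP rest.
  exists j; first by rewrite in_setT.
  apply/ffunP => i; apply/val_inj; rewrite /= madd1E //.
  case: (eqVneq i j) => [->|nij] /=; first by rewrite -ej subnKC // ltnW.
  have := rest i; rewrite nij /= msubE subn_eq0 addn0 => h.
  by apply/eqP; rewrite eqn_leq h (forallP hle i).
- case=> j _ ->; rewrite deg_madd1 // hb leqnn /=.
  apply/andP; split; first by apply/forallP => i; rewrite madd1E // leq_addr.
  apply/eqP => E; have := congr1 deg E; rewrite deg_madd1 //.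
  by move/eqP; rewrite eq_sym (gtn_eqF (ltnSn _)).
Qed.

Definition le_on (s : seq 'I_n) (a b : M) :=
  mle b a && [forall j, (j \notin s) ==> ((b j : nat) == 0%N)].

Lemma upd_upd0 b i t : (upd (upd b i t) i ord0 == b) = ((b i : nat) == 0%N).
Proof.
apply/eqP/eqP => [<-|H]; first by rewrite ffunE eqxx.
apply/ffunP => j; rewrite !ffunE; case: eqP => [->|//].
by apply/val_inj; rewrite /= H.
Qed.

Lemma sum_le_on_cons (V : nmodType) i s a (F : M -> V) : i \notin s ->
  \sum_(b' | le_on (i :: s) a b') F b' =
  \sum_(b | le_on s a b) \sum_(t : 'I_N.+1 | (t <= a i)%N) F (upd b i t).
Proof.
move=> ins; rewrite pair_big_dep.
rewrite [LHS](reindex_onto (fun p : M * 'I_N.+1 => upd p.1 i p.2)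
                        (fun b' => (upd b' i ord0, b' i))); last first.
  by move=> b' _; apply/ffunP => j; rewrite !ffunE; case: eqP => [->|].
apply: eq_bigl => [[b t]] /=.
rewrite xpair_eqE upd_upd0 ffunE eqxx eqxx andbT /le_on /mle.
apply/idP/idP.
- case/andP => /andP [/forallP Hle /forallP Hz] /eqP bi0.
  have Hti : (t <= a i)%N by move: (Hle i); rewrite ffunE eqxx.
  rewrite Hti andbT; apply/andP; split.
  + apply/forallP => j; case: (eqVneq j i) => [->|nji]; first by rewrite bi0.
    by move: (Hle j); rewrite ffunE (negbTE nji).
  + apply/forallP => j; apply/implyP => js.
    case: (eqVneq j i) => [->|nji]; first by rewrite bi0.
    move: (Hz j); rewrite in_cons negb_or nji js ffunE (negbTE nji).
    by move/implyP; apply.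
- case/andP => /andP [/forallP Hle /forallP Hz] Hti.
  have bi0 : (b i : nat) = 0%N by apply/eqP; move/implyP: (Hz i); apply.
  rewrite bi0 eqxx andbT; apply/andP; split.
  + apply/forallP => j; rewrite ffunE; case: eqP => [->//|_]; exact: Hle.
  + apply/forallP => j; apply/implyP; rewrite in_cons negb_or => /andP [nji js].
    by rewrite ffunE (negbTE nji); exact: (implyP (Hz j) js).
Qed.

End MultiIndex.

Arguments mzero {n N}.

Section HasseSchmidtBasis.
Variables (k : comPzRingType) (A : comAlgType k) (n : nat).
Variable D : 'I_n -> nat -> A -> A.
Hypothesis hHS : forall j, is_HS (D j).

Lemma HS_id i x : D i 0 x = x.
Proof. by case: (hHS i) => h _. Qed.

Lemma HS_klinear i r : klinear (D i r).
Proof. by case: (hHS i) => _ [h _]. Qed.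

Lemma HS_leibniz i m x y :
  D i m (x * y) = \sum_(r < m.+1) D i r x * D i (m - r)%N y.
Proof. by case: (hHS i) => _ [_ h]. Qed.

Definition Dword (s : seq 'I_n) (f : 'I_n -> nat) : A -> A :=
  foldr (fun i g => D i (f i) \o g) id s.

Lemma Dword_klinear s f : klinear (Dword s f).
Proof. by elim: s => [|i s IH] //=; exact: klinear_comp (HS_klinear _ _) IH. Qed.

Lemma eq_Dword s f g : {in s, f =1 g} -> Dword s f = Dword s g.
Proof.
elim: s => [|i s IH] //= H; rewrite H ?mem_head // IH // => j js.
by apply: H; rewrite in_cons js orbT.
Qed.

Lemma Dword0 s f x : {in s, forall j, f j = 0%N} -> Dword s f x = x.
Proof.
elim: s => [|i s IH] //= H; rewrite H ?mem_head // HS_id IH // => j js.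
by apply: H; rewrite in_cons js orbT.
Qed.

Lemma Dword_unit s f i x : uniq s -> i \in s ->
  (forall j, f j = (j == i) :> nat) -> Dword s f x = D i 1 x.
Proof.
elim: s => [|j s IH] //= /andP [js us] ins H.
case: (eqVneq j i) => [eji|nji].
  subst j; rewrite H eqxx Dword0 // => j' j's; rewrite H.
  by case: eqP => // e; subst j'; rewrite j's in js.
rewrite H (negbTE nji) HS_id IH //.
by move: ins; rewrite in_cons eq_sym (negbTE nji).
Qed.

Variable N : nat.
Local Notation M := (mindex n N).

Definition Dmon (a : M) : A -> A := Dword (enum 'I_n) (mval a).

Lemma Dmon_klinear a : klinear (Dmon a).
Proof. exact: Dword_klinear. Qed.

Lemma Dmon0 x : Dmon mzero x = x.
Proof. by rewrite /Dmon Dword0 // => j _; rewrite /mval mzeroE. Qed.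

Lemma Dmon_madd1 (b : M) j y : (deg b < N)%N -> Dmon (msub (madd1 b j) b) y = D j 1 y.
Proof.
move=> h; apply: Dword_unit; rewrite ?enum_uniq ?mem_enum // => i.
by rewrite /mval msubE madd1E // addKn.
Qed.

Lemma Dword_leibniz s (a : M) y x : uniq s ->
  Dword s (mval a) (y * x) =
  \sum_(b | le_on s a b) Dword s (mval (msub a b)) y * Dword s (mval b) x.
Proof.
elim: s => [|i s IH] /=.
  move=> _; rewrite (big_pred1 mzero) //= => b; rewrite /le_on /=.
  apply/idP/eqP => [/andP [_ /forallP H]|->].
    apply/ffunP => j; apply/val_inj; rewrite /= mzeroE; apply/eqP.
    by have := H j; rewrite ?in_nil.
  by apply/andP; split; apply/forallP => j; rewrite ?mzeroE.
case/andP => ins us; rewrite IH // klinear_sum; last exact: HS_klinear.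
rewrite (sum_le_on_cons _ _ ins); apply: eq_bigr => b _.
have Esub t : Dword s (mval (msub a (upd b i t))) = Dword s (mval (msub a b)).
  apply: eq_Dword => j js; rewrite /mval !msubE ffunE; case: eqP => // eji.
  by rewrite -eji js in ins.
have Eupd t : Dword s (mval (upd b i t)) = Dword s (mval b).
  apply: eq_Dword => j js; rewrite /mval ffunE; case: eqP => // eji.
  by rewrite -eji js in ins.
set U := Dword s (mval (msub a b)) y; set V := Dword s (mval b) x.
transitivity (\sum_(t : 'I_N.+1 | (t <= a i)%N) D i (a i - t)%N U * D i t V); last first.
  by apply: eq_bigr => t _ /=; rewrite Esub Eupd /mval msubE ffunE eqxx.
have hai : ((a i).+1 <= N.+1)%N by rewrite ltnS -ltnS ltn_ord.
rewrite HS_leibniz (reindex_inj rev_ord_inj) /=.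
transitivity (\sum_(r < (a i).+1) D i (a i - r)%N U * D i r V).
  by apply: eq_bigr => r _; rewrite subSS subKn // -ltnS.
by rewrite (big_ord_widen N.+1 (fun r : nat => D i (a i - r)%N U * D i r V) hai).
Qed.

Lemma Dmon_leibniz (a : M) y x :
  Dmon a (y * x) = \sum_(b | mle b a) Dmon (msub a b) y * Dmon b x.
Proof.
rewrite /Dmon Dword_leibniz ?enum_uniq //; apply: eq_bigl => b.
by rewrite /le_on (_ : [forall j, _] = true) ?andbT //; apply/forallP => j; rewrite mem_enum.
Qed.

Lemma Dmon_commutator (a : M) y x :
  Dmon a (y * x) - y * Dmon a x = \sum_(b | mlt b a) Dmon (msub a b) y * Dmon b x.
Proof.
rewrite Dmon_leibniz (bigD1 a) ?mle_refl //= msubaa Dmon0 addrC addrK.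
by apply: eq_bigl => b; rewrite /mlt.
Qed.

Definition Dsum (m : nat) (c : M -> A) (x : A) : A :=
  \sum_(a : M | (deg a <= m)%N) c a * Dmon a x.

Definition commutator_coeff (m : nat) (c : M -> A) (z : A) (b : M) : A :=
  \sum_(a | (deg a <= m)%N && mlt b a) c a * Dmon (msub a b) z.

Lemma Dsum_commutator m c z x :
  Dsum m c (z * x) - z * Dsum m c x =
  \sum_(b : M | (deg b < m)%N) commutator_coeff m c z b * Dmon b x.
Proof.
rewrite /Dsum mulr_sumr -sumrB.
transitivity (\sum_(a | (deg a <= m)%N) \sum_(b | mlt b a)
                 c a * (Dmon (msub a b) z * Dmon b x)).
  by apply: eq_bigr => a _; rewrite mulrCA -mulrBr Dmon_commutator mulr_sumr.
rewrite (exchange_big_dep (fun b => (deg b < m)%N)); last first.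
  by move=> a b ha hb; exact: leq_trans (mlt_deg hb) ha.
apply: eq_bigr => b _; rewrite mulr_suml; apply: eq_bigr => a _.
by rewrite mulrA.
Qed.

Lemma Dsum_commutatorS m c z x :
  Dsum m.+1 c (z * x) - z * Dsum m.+1 c x = Dsum m (commutator_coeff m.+1 c z) x.
Proof. by rewrite Dsum_commutator. Qed.

Lemma commutator_coeff_next m c z (b : M) : deg b = m -> (m < N)%N ->
  commutator_coeff m.+1 c z b = \sum_(j < n) c (madd1 b j) * D j 1 z.
Proof.
move=> hb hm; rewrite /commutator_coeff (sum_madd1 _ hb hm).
by apply: eq_bigr => j _; rewrite Dmon_madd1 ?hb.
Qed.

Lemma Dsum_klinear m c : klinear (Dsum m c).
Proof.
move=> r x y; rewrite /Dsum scaler_sumr -big_split; apply: eq_bigr => a _ /=.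
by rewrite Dmon_klinear mulrDr scalerAr.
Qed.

Lemma Dsum0 c x : Dsum 0 c x = c mzero * x.
Proof.
rewrite /Dsum (big_pred1 mzero) ?Dmon0 // => a.
by rewrite /= leqn0 deg_eq0.
Qed.

Lemma Dsum_diffop m c : diffop_le m (Dsum m c).
Proof.
elim: m c => [|m IH] c /=; first by exists (c mzero) => x; rewrite Dsum0.
split=> [|y]; first exact: Dsum_klinear.
rewrite (_ : (fun x => _) = Dsum m (commutator_coeff m.+1 c y)) //.
by apply: functional_extensionality => x; rewrite Dsum_commutatorS.
Qed.

Lemma DsumD m c1 c2 x : Dsum m (fun a => c1 a + c2 a) x = Dsum m c1 x + Dsum m c2 x.
Proof. by rewrite /Dsum -big_split; apply: eq_bigr => a _; rewrite mulrDl. Qed.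

Lemma DsumB m c1 c2 x : Dsum m (fun a => c1 a - c2 a) x = Dsum m c1 x - Dsum m c2 x.
Proof. by rewrite /Dsum -sumrB; apply: eq_bigr => a _; rewrite mulrBl. Qed.

Lemma DsumZ m r c x : Dsum m (fun a => r *: c a) x = r *: Dsum m c x.
Proof. by rewrite /Dsum scaler_sumr; apply: eq_bigr => a _; rewrite scalerAl. Qed.

Lemma DsumM m y c x : Dsum m (fun a => y * c a) x = y * Dsum m c x.
Proof. by rewrite /Dsum mulr_sumr; apply: eq_bigr => a _; rewrite mulrA. Qed.

Lemma Dsum_top m c : (forall a, deg a = m.+1 -> c a = 0) ->
  forall x, Dsum m.+1 c x = Dsum m c x.
Proof.
move=> H x; rewrite /Dsum (bigID (fun a => (deg a <= m)%N)) /=.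
rewrite [X in _ + X]big1 ?addr0.
  by apply: eq_bigl => a; apply/andb_idl => h; apply: leqW.
move=> a /andP [h1 h2]; rewrite H ?mul0r //.
by apply/eqP; rewrite eqn_leq h1 ltnNge.
Qed.

Lemma Dsum_widen m m' c x : (m <= m')%N ->
  Dsum m c x = Dsum m' (fun a => if (deg a <= m)%N then c a else 0) x.
Proof.
move=> hmm; rewrite /Dsum (bigID (fun b => (deg b <= m)%N) (fun b => (deg b <= m')%N)) /=.
rewrite [X in _ = _ + X]big1 ?addr0; last first.
  by move=> b /andP [_ /negbTE ->]; rewrite mul0r.
apply: eq_big => [b|b hb]; last by rewrite hb.
by apply/idP/idP => [h|/andP [] //]; rewrite h andbT (leq_trans h).
Qed.

Lemma Dsum_low m e x :
  Dsum m (fun b => if (deg b < m)%N then e b else 0) x =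
  \sum_(b | (deg b < m)%N) e b * Dmon b x.
Proof.
rewrite /Dsum (bigID (fun b => (deg b < m)%N)) /=.
rewrite [X in _ + X = _]big1 ?addr0; last first.
  by move=> b /andP [_ /negbTE ->]; rewrite mul0r.
apply: eq_big => [b|b hb]; last by case/andP: hb => _ ->.
by apply/idP/idP => [/andP [] //|h]; rewrite h ltnW.
Qed.

Lemma diffop_of_commutator m (Q : A -> A) (e : A -> M -> A) : klinear Q ->
  (forall y x, Q (y * x) - y * Q x = Dsum m (e y) x) ->
  (forall y b, deg b = m -> e y b = 0) -> diffop_le m Q.
Proof.
move=> hkl H He; case: m H He => [|m] H He /=.
  exists (Q 1) => y; have := H y 1; rewrite mulr1 Dsum0 He ?deg_mzero //.
  by rewrite mul0r => /eqP; rewrite subr_eq0 => /eqP ->; rewrite mulrC.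
split=> // y; rewrite (_ : (fun x => _) = Dsum m (e y)); first exact: Dsum_diffop.
apply: functional_extensionality => x; rewrite H Dsum_top // => a ha.
exact: He.
Qed.

Section Expansion.
Hypothesis hfree : forall c : 'I_n -> A,
  (forall x, \sum_(j < n) c j * D j 1%N x = 0) -> forall j, c j = 0.

(* Uniqueness: Dsum m c = 0 forces every coefficient of degree <= m to
   vanish.  The top coefficients are read off the commutators with y by
   freeness of the D^j_1; the lower ones by induction. *)
Lemma Dsum_eq0 m c : (m <= N)%N -> (forall x, Dsum m c x = 0) ->
  forall a, (deg a <= m)%N -> c a = 0.
Proof.
elim: m c => [|m IH] c hm Hc a ha.
  by have := Hc 1; rewrite Dsum0 mulr1; move: ha; rewrite leqn0 deg_eq0 => /eqP ->.
have top a' : deg a' = m.+1 -> c a' = 0.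
  move=> ha'; have [b [j [hb <-]]] := madd1_onto ha'.
  apply: (hfree (c := fun j => c (madd1 b j))) => y.
  rewrite -(commutator_coeff_next _ _ hb hm).
  apply: (IH (commutator_coeff m.+1 c y) (ltnW hm)) => [x|]; last by rewrite hb.
  by rewrite -Dsum_commutatorS !Hc mulr0 subrr.
have [/top //|ne] := eqVneq (deg a) m.+1.
have ham : (deg a <= m)%N by rewrite -ltnS ltn_neqAle ne ha.
apply: (IH c (ltnW hm)) ham => x.
by rewrite -(Dsum_top top) Hc.
Qed.

Lemma Dsum_inj m c1 c2 : (m <= N)%N -> (forall x, Dsum m c1 x = Dsum m c2 x) ->
  forall a, (deg a <= m)%N -> c1 a = c2 a.
Proof.
move=> hm H a ha; apply/eqP; rewrite -subr_eq0; apply/eqP.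
apply: (Dsum_eq0 (c := fun a => c1 a - c2 a) hm) ha => x.
by rewrite DsumB H subrr.
Qed.

Section InductionStep.
Variables (m : nat) (P : A -> A) (c : A -> M -> A).
Hypotheses (hm : (m < N)%N) (hPlin : klinear P)
  (hc : forall y x, P (y * x) - y * P x = Dsum m (c y) x).

Lemma commutator_coeff_der b : deg b = m -> is_der (fun y => c y b).
Proof.
move=> hb; have hmN := ltnW hm; split.
- move=> r y y'; apply: (Dsum_inj (c1 := c (r *: y + y'))
                           (c2 := fun a => r *: c y a + c y' a) hmN); last by rewrite hb.
  move=> x; rewrite DsumD DsumZ -!hc mulrDl -scalerAl hPlin mulrDl -scalerAl.
  by rewrite scalerBr opprD addrACA.
- move=> y z; pose E := commutator_coeff m (c y) z.
  have key x : Dsum m (c (y * z)) x =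
    Dsum m (fun a => z * c y a + y * c z a + (if (deg a < m)%N then E a else 0)) x.
    rewrite !DsumD Dsum_low !DsumM -Dsum_commutator -!hc -!mulrA; ring.
  have := Dsum_inj hmN key (a := b); rewrite hb leqnn ltnn addr0 => /(_ isT) ->.
  by rewrite mulrC.
Qed.

(* [[P, y], z] = [[P, z], y], read on the coefficients of degree m - 1. *)
Lemma commutator_coeff_sym g y z : (deg g).+1 = m ->
  \sum_(i < n) c y (madd1 g i) * D i 1 z = \sum_(i < n) c z (madd1 g i) * D i 1 y.
Proof.
move=> hg; have hgN : (deg g < N)%N by rewrite ltnW // hg.
rewrite -!(commutator_coeff_next _ _ (erefl (deg g)) hgN).
apply: (Dsum_inj (ltnW hgN)) (leqnn _) => x.
by rewrite -!Dsum_commutatorS hg -!hc (mulrCA z y x); ring.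
Qed.

Variable h : M -> 'I_n -> A.
Hypothesis hh : forall b, deg b = m -> forall y, c y b = \sum_(j < n) h b j * D j 1 y.

Lemma h_sym g i j : (deg g).+1 = m -> h (madd1 g i) j = h (madd1 g j) i.
Proof.
move=> hg; pose H p q := h (madd1 g p) q.
have antisym y l : \sum_(j < n) (H l j - H j l) * D j 1 y = 0.
  move: l; apply: (hfree (c := fun l => \sum_(j < n) (H l j - H j l) * D j 1 y)) => z.
  rewrite (eq_bigr (fun l => \sum_(j < n) H l j * D j 1 y * D l 1 z
                             - \sum_(j < n) H j l * D j 1 y * D l 1 z)); last first.
    by move=> l _; rewrite mulr_suml -sumrB; apply: eq_bigr => q _; rewrite !mulrBl.
  rewrite sumrB; apply/eqP; rewrite subr_eq0; apply/eqP.
  transitivity (\sum_(l < n) c y (madd1 g l) * D l 1 z).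
    by apply: eq_bigr => l _; rewrite hh ?mulr_suml // -hg deg_madd1 // ltnW // hg.
  rewrite commutator_coeff_sym // exchange_big /=; apply: eq_bigr => l _.
  rewrite hh; last by rewrite deg_madd1 // ltnW // hg.
  rewrite mulr_suml; apply: eq_bigr => q _.
  by rewrite /H -mulrA (mulrC (D q 1 z)) mulrA.
apply/eqP; rewrite -subr_eq0; apply/eqP.
exact: (hfree (c := fun j => H i j - H j i) (antisym ^~ i)).
Qed.

Definition top_coeff (a : M) : A :=
  if deg a == m.+1 then
    if [pick j | (0 < a j)%N] is Some j then h (msub1 a j) j else 0
  else 0.

Lemma top_coeffE b j : deg b = m -> top_coeff (madd1 b j) = h b j.
Proof.
move=> hb; have hbN : (deg b < N)%N by rewrite hb.
rewrite /top_coeff deg_madd1 // hb eqxx; case: pickP => [j0 hj0|H0]; last first.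
  by have := H0 j; rewrite madd1E // eqxx addn1.
have [->|nj] := eqVneq j0 j; first by rewrite msub1_madd1.
have hb0 : (0 < b j0)%N by move: hj0; rewrite madd1E // (negbTE nj) addn0.
rewrite eq_sym in nj; rewrite msub1_madd1C // h_sym ?madd1_msub1 //.
by rewrite deg_msub1.
Qed.

Lemma lower_order : diffop_le m (fun x => P x - Dsum m.+1 top_coeff x).
Proof.
apply: (diffop_of_commutator
          (e := fun y b => c y b - commutator_coeff m.+1 top_coeff y b)).
- by move=> r x x'; rewrite hPlin Dsum_klinear scalerBr opprD addrACA.
- by move=> y x; rewrite DsumB -hc -Dsum_commutatorS; ring.
- move=> y b hb; rewrite commutator_coeff_next // hh //.
  by apply/eqP; rewrite subr_eq0; apply/eqP/eq_bigr => j _; rewrite top_coeffE.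
Qed.

End InductionStep.

Hypothesis hspan : forall f : A -> A, is_der f ->
  exists c : 'I_n -> A, forall x, f x = \sum_(j < n) c j * D j 1%N x.

Lemma Dsum_exists m P : (m <= N)%N -> diffop_le m P ->
  exists c, forall x, P x = Dsum m c x.
Proof.
elim: m P => [|m IH] P hm /=.
  by case=> a Ha; exists (fun _ => a) => x; rewrite Dsum0 Ha.
case=> hPlin hcomm.
have [c hc] : exists c : A -> M -> A,
    forall y x, P (y * x) - y * P x = Dsum m (c y) x.
  apply: (ClassicalEpsilon.choice
            (fun y cy => forall x, P (y * x) - y * P x = Dsum m cy x)) => y.
  exact: IH (ltnW hm) (hcomm y).
have [h hh] : exists h : M -> 'I_n -> A,
    forall b, deg b = m -> forall y, c y b = \sum_(j < n) h b j * D j 1 y.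
  apply: (ClassicalEpsilon.choice (fun b hb => deg b = m ->
            forall y, c y b = \sum_(j < n) hb j * D j 1 y)) => b.
  have [db|nb] := eqVneq (deg b) m; last first.
    by exists (fun _ => 0) => db; rewrite db eqxx in nb.
  by have [hb Hh] := hspan (commutator_coeff_der hm hPlin hc db); exists hb.
have [c' hc'] := IH _ (ltnW hm) (lower_order hm hPlin hc hh).
exists (fun a => (if (deg a <= m)%N then c' a else 0) + top_coeff m h a) => x.
by rewrite DsumD -Dsum_widen // -hc' subrK.
Qed.

End Expansion.

End HasseSchmidtBasis.


Theorem mainTheorem15 (k : comPzRingType) (A : comAlgType k) (n : nat)
  (D : 'I_n -> nat -> A -> A)
  (hHS : forall j, is_HS (D j))
  (hIder : forall f : A -> A, is_ider f <-> is_der f)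
  (hspan : forall f : A -> A, is_der f ->
     exists c : 'I_n -> A, forall x, f x = \sum_(j < n) c j * D j 1%N x)
  (hfree : forall c : 'I_n -> A,
     (forall x, \sum_(j < n) c j * D j 1%N x = 0) -> forall j, c j = 0)
  (d : nat) (P : A -> A) (hP : diffop_le d P) :
  (exists a : {ffun 'I_n -> 'I_d.+1} -> A,
     forall x, P x = \sum_(alpha : {ffun 'I_n -> 'I_d.+1} |
                            (\sum_(i < n) (alpha i : nat) <= d)%N)
                       a alpha * Dmulti D (fun i => (alpha i : nat)) x) /\
  (forall a b : {ffun 'I_n -> 'I_d.+1} -> A,
     (forall x, P x = \sum_(alpha : {ffun 'I_n -> 'I_d.+1} |
                            (\sum_(i < n) (alpha i : nat) <= d)%N)
                       a alpha * Dmulti D (fun i => (alpha i : nat)) x) ->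
     (forall x, P x = \sum_(alpha : {ffun 'I_n -> 'I_d.+1} |
                            (\sum_(i < n) (alpha i : nat) <= d)%N)
                       b alpha * Dmulti D (fun i => (alpha i : nat)) x) ->
     forall alpha : {ffun 'I_n -> 'I_d.+1},
       (\sum_(i < n) (alpha i : nat) <= d)%N -> a alpha = b alpha).
Proof.
split.
  have [c hc] := Dsum_exists hHS (N := d) hfree hspan (leqnn d) hP.
  by exists c => x; exact: hc.
move=> a b ha hb; apply: (Dsum_inj hHS hfree (leqnn d)) => x.
exact: etrans (esym (ha x)) (hb x).
Qed.
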